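(* Let $G=(V,E)$ be a connected undirected graph (parallel edges allowed) with reactances $r_e>0$ and admittance matrix $\mathbf{A}$, $\vec{\theta}\in\mathbb{R}^V$, $\vec{p}=\mathbf{A}\vec{\theta}$. Let $H=(V_H,E_H)$ be a subgraph of $G$, $F\subseteq E_H$, $\mathbf{A}'$ the admittance matrix of $G'=(V,E\setminus F)$ (assumed connected), and $\vec{\theta}'$ with $\mathbf{A}'\vec{\theta}'=\vec{p}$. Suppose a data replay attack: there are $\vec{\theta}'',\vec{p}''\in\mathbb{R}^V$ with $\mathbf{A}\vec{\theta}''=\vec{p}''$ and $p''_v=p_v$ for all $v\in V_H$, and the observed vector $\vec{\theta}^{\star}$ satisfies $\theta^{\star}_v=\theta''_v$ for $v\in V_H$ and $\theta^{\star}_v=\theta'_v$ for $v\notin V_H$. Then for every $i\in\mathrm{int}(H)\cup\mathrm{int}(\bar H)$, $\mathbf{A}_i\vec{\theta}^{\star}=p_i$.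
   Context: Admittance matrix: for $u\neq v$, $a_{uv}=-\sum_e 1/r_e$ over edges joining $u,v$ ($0$ if none), $a_{uu}=-\sum_{w\neq u}a_{uw}$; $\mathbf{A}_i$ is its $i$-th row. $\bar H$ is the subgraph induced by $V\setminus V_H$. For a subgraph $S$ with node set $V_S$, $\mathrm{int}(S)=\{i\in V_S: N(i)\subseteq V_S\}$ with $N(i)$ the neighbors of $i$ in $G$. *)

From HB Require Import structures.
From mathcomp Require Import all_boot all_order all_algebra.
Set Implicit Arguments. Unset Strict Implicit. Unset Printing Implicit Defensive.
Import Order.TTheory GRing.Theory Num.Theory.
Local Open Scope ring_scope.

(* A multigraph on vertex type V with edge type E: each edge e has an
   (unordered) pair of endpoints ends e. A graph on V is given by a set of
   edges S : {set E}; G itself uses all edges [set: E]. *)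

Definition joins (V E : finType) (ends : E -> V * V) (e : E) (u v : V) : bool :=
  (((ends e).1 == u) && ((ends e).2 == v)) || (((ends e).1 == v) && ((ends e).2 == u)).

Definition adj (V E : finType) (ends : E -> V * V) (S : {set E}) : rel V :=
  fun u v => [exists e in S, joins ends e u v].

Definition connected_graph (V E : finType) (ends : E -> V * V) (S : {set E}) : Prop :=
  forall u v : V, connect (adj ends S) u v.

Definition adm_off (R : realFieldType) (V E : finType) (ends : E -> V * V)
  (r : E -> R) (S : {set E}) (u v : V) : R :=
  - \sum_(e in S | joins ends e u v) (r e)^-1.

Definition admittance (R : realFieldType) (V E : finType) (ends : E -> V * V)
  (r : E -> R) (S : {set E}) (u v : V) : R :=
  if u == v then - \sum_(w | w != u) adm_off ends r S u w
  else adm_off ends r S u v.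

Definition row_app (R : realFieldType) (V : finType) (A : V -> V -> R)
  (i : V) (theta : V -> R) : R :=
  \sum_(j : V) A i j * theta j.

Definition nbrs (V E : finType) (ends : E -> V * V) (i : V) : {set V} :=
  [set j | (j != i) && [exists e, joins ends e i j]].

Definition interior (V E : finType) (ends : E -> V * V) (VS : {set V}) : {set V} :=
  [set i in VS | nbrs ends i \subset VS].

From HB Require Import structures.
From mathcomp Require Import all_boot all_order all_algebra.
Import Order.TTheory GRing.Theory Num.Theory.
Local Open Scope ring_scope.

(* The row A_i only involves theta on i and its neighbours, and only the edges
   incident to i.  On int(H) the observed angles are those of theta'', whose
   injections agree with p on V_H; on int(H-bar) they are those of theta', and
   no removed edge (all lie inside H) touches i, so A_i = A'_i there. *)

Section Admittance.

Context {R : realFieldType} {V E : finType} {ends : E -> V * V} {r : E -> R}.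

Lemma joins_incident {e : E} {u v : V} :
  joins ends e u v -> ((ends e).1 == u) || ((ends e).2 == u).
Proof. by case/orP=> /andP[] => [-> // | _ ->]; rewrite orbT. Qed.

Lemma admittance_nbrs0 (S : {set E}) (i j : V) :
  j != i -> j \notin nbrs ends i -> admittance ends r S i j = 0.
Proof.
move=> neq_ji notnbr; rewrite /admittance eq_sym (negbTE neq_ji) /adm_off.
rewrite big1 ?oppr0 // => e /andP[_ he].
by move: notnbr; rewrite inE neq_ji /=; case/existsP; exists e.
Qed.

Lemma eq_admittance_row (S T : {set E}) (i : V) :
    (forall e, ((ends e).1 == i) || ((ends e).2 == i) -> (e \in S) = (e \in T)) ->
  admittance ends r S i =1 admittance ends r T i.
Proof.
move=> eqST; have eq_off w : adm_off ends r S i w = adm_off ends r T i w.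
  rewrite /adm_off; congr (- _); apply: eq_bigl => e.
  by case je: (joins ends e i w); rewrite ?andbF // !andbT (eqST _ (joins_incident je)).
move=> j; rewrite /admittance eq_off; case: (i == j) => //.
by congr (- _); apply: eq_bigr => w _.
Qed.

Lemma row_app_interior {VS : {set V}} {T : {set E}} {i : V} {th1 th2 : V -> R} :
    i \in interior ends VS -> {in VS, th1 =1 th2} ->
  row_app (admittance ends r T) i th1 = row_app (admittance ends r T) i th2.
Proof.
rewrite inE => /andP[iVS nbrsVS] eq_th; apply: eq_bigr => j _.
have [->|neq_ji] := eqVneq j i; first by rewrite eq_th.
have [nbr|notnbr] := boolP (j \in nbrs ends i).
  by rewrite eq_th // (subsetP nbrsVS).
by rewrite admittance_nbrs0 // !mul0r.
Qed.

End Admittance.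

Theorem lemma5p5 (R : realFieldType) (V E : finType) (ends : E -> V * V)
  (r : E -> R) (hr : forall e, 0 < r e)
  (hconn : connected_graph ends [set: E])
  (theta p : V -> R)
  (hp : forall i, p i = row_app (admittance ends r [set: E]) i theta)
  (VH : {set V}) (EH : {set E})
  (hH : forall e, e \in EH -> ((ends e).1 \in VH) && ((ends e).2 \in VH))
  (F : {set E}) (hF : F \subset EH)
  (hconn' : connected_graph ends (~: F))
  (theta' : V -> R)
  (htheta' : forall i, row_app (admittance ends r (~: F)) i theta' = p i)
  (theta'' p'' : V -> R)
  (htheta'' : forall i, row_app (admittance ends r [set: E]) i theta'' = p'' i)
  (hp'' : forall v, v \in VH -> p'' v = p v)
  (thstar : V -> R)
  (hstarH : forall v, v \in VH -> thstar v = theta'' v)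
  (hstarN : forall v, v \notin VH -> thstar v = theta' v) :
  forall i, i \in interior ends VH :|: interior ends (~: VH) ->
    row_app (admittance ends r [set: E]) i thstar = p i.
Proof.
move=> i; rewrite inE => /orP[intH | intHc].
  have iVH : i \in VH by move: intH; rewrite inE => /andP[].
  by rewrite -hp'' // -htheta''; apply: (row_app_interior intH hstarH).
have iVH : i \notin VH by move: intHc; rewrite !inE => /andP[].
have no_removed_edge e : ((ends e).1 == i) || ((ends e).2 == i) -> e \notin F.
  apply: contraTN => eF; have /andP[e1 e2] := hH e (subsetP hF e eF).
  by apply/norP; split; apply: contraNneq iVH => <-.
have rowA : admittance ends r [set: E] i =1 admittance ends r (~: F) i.
  by apply: eq_admittance_row => e /no_removed_edge; rewrite in_setT inE => ->.
have -> : row_app (admittance ends r [set: E]) i thstar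
          = row_app (admittance ends r [set: E]) i theta'.
  by apply: (row_app_interior intHc) => v; rewrite inE => /hstarN.
by rewrite -htheta'; apply: eq_bigr => j _; rewrite rowA.
Qed.
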